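(* There is a one-to-one correspondence between triples of lifted partial permutations of the form $(\tilde S,\tilde f)$, $(\tilde T,\tilde g)$, $(\tilde S,\tilde g\circ\tilde f)$ with $\tilde T=\tilde f(\tilde S)$, and triangularly connected triples of Heegaard states $\mathbf x\in\mathfrak S(\mathcal H_{\alpha\beta})$, $\mathbf y\in\mathfrak S(\mathcal H_{\beta\gamma})$, $\mathbf z\in\mathfrak S(\mathcal H_{\alpha\gamma})$ (where $\mathbf x,\mathbf y,\mathbf z$ correspond to $\tilde f$, $\tilde g$, $\tilde g\circ\tilde f$ respectively). Moreover, if $\psi\in D(\mathbf x,\mathbf y,\mathbf z)$ is the domain connecting them, then for each $i=1,\dots,m$, $$w_i(\tilde f)+w_i(\tilde g)=w_i(\tilde g\circ\tilde f)+n_{O_i}(\psi),$$ where $n_{O_i}(\psi)$ is the local multiplicity of $\psi$ at $O_i$.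
   Context: Fix $0<k<m$. $G_m$ is the group of isometries of $\mathbb R$ generated by $x\mapsto1-x$, $x\mapsto2m-1-x$; $Q_2(j-\frac12)$ is the unique $i\in\{1,\dots,m\}$ with $i\equiv j$ or $i\equiv 2-j\pmod{2m-2}$. A lifted partial permutation on $k$ letters is a pair $(\tilde S,\tilde f)$ with $\tilde S\subset\mathbb Z$ $G_m$-invariant, $|\tilde S/G_m|=k$, $\tilde f:\tilde S\to\mathbb Z$ $G_m$-equivariant with injective induced map $\tilde S/G_m\to\mathbb Z/G_m$; $w_j(\tilde f)=\tfrac12\#\{i\in\tilde S: i<j-\tfrac12<\tilde f(i)\text{ or } i>j-\tfrac12>\tilde f(i)\}$. Heegaard triple: in $\mathbb R^2$ with punctures $O_{Q_2(i+1/2)}$ at $(i+\frac12,i+\frac12)$ and $\mathbb G_m$ generated by the $180^\circ$ rotations about $(\frac12,\frac12)$ and $(m-\frac12,m-\frac12)$, take lines $\tilde\alpha_\ell=\{\ell\}\times\mathbb R$, $\tilde\gamma_\ell=\mathbb R\times\{\ell\}$, and a $\mathbb G_m$-invariant family of lines $\tilde\beta_\ell$ ($\ell\in\mathbb Z$) of slope $-1$, with $\tilde\beta_\ell$ crossing the diagonal between $(\ell-\frac12,\ell-\frac12)$ and $(\ell+\frac12,\ell+\frac12)$, and no triple intersection among an $\tilde\alpha$-line, a $\tilde\beta$-line and the diagonal. $\mathcal H=\mathbb R^2/\mathbb G_m$ with the image curves. A Heegaard state for $\mathcal H_{\alpha\beta}$ corresponds to $(\tilde S,\tilde f)$ via its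 lift $\bigcup_{s\in\tilde S}\tilde\alpha_s\cap\tilde\beta_{\tilde f(s)}$; similarly states of $\mathcal H_{\beta\gamma}$ via $\bigcup_t\tilde\beta_t\cap\tilde\gamma_{\tilde g(t)}$ and of $\mathcal H_{\alpha\gamma}$ via $\bigcup_s\tilde\alpha_s\cap\tilde\gamma_{\tilde h(s)}$. States $\mathbf x,\mathbf y,\mathbf z$ are triangularly connected if their $\mathbb G_m$-equivariant lifts $\tilde{\mathbf x},\tilde{\mathbf y},\tilde{\mathbf z}$ admit $k$ triangles in $\mathbb R^2$ with sides on $\tilde\alpha$, $\tilde\beta$, $\tilde\gamma$ lines in counterclockwise order, whose $\mathbb G_m$-orbits have corners exactly at $\tilde{\mathbf x},\tilde{\mathbf y},\tilde{\mathbf z}$; the quotient of these triangles is a two-chain $\psi\in D(\mathbf x,\mathbf y,\mathbf z)$ (two-chains with $\mathbf x$ as initial $\alpha\beta$ corners, $\mathbf y$ initial $\beta\gamma$ corners, $\mathbf z$ terminal $\alpha\gamma$ corners). *)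

From HB Require Import structures.
From mathcomp Require Import all_boot all_order all_algebra.
From mathcomp Require Import finmap all_classical all_reals.
Set Implicit Arguments.
Unset Strict Implicit.
Unset Printing Implicit Defensive.
Import Order.TTheory GRing.Theory Num.Theory.
Local Open Scope classical_set_scope.
Local Open Scope ring_scope.

(* G_m is generated by the two reflections sigma1 x = 1 - x and        *)
(* sigma2 x = 2m - 1 - x.  An element of the generated group is a      *)
(* finite composition of generators, encoded by a word (seq bool):     *)
(* false = sigma1, true = sigma2.  (Both generators are involutions,   *)
(* so these words give exactly the generated group.)                   *)

Definition Gword := seq bool.

Definition genZ (m : nat) (b : bool) (x : int) : int :=
  if b then (2 * m%:Z - 1) - x else 1 - x.

Definition actZ (m : nat) (w : Gword) (x : int) : int :=
  foldr (genZ m) x w.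

Definition genR (R : realType) (m : nat) (b : bool) (x : R) : R :=
  if b then (2 * m%:R - 1) - x else 1 - x.

Definition actR (R : realType) (m : nat) (w : Gword) (x : R) : R :=
  foldr (@genR R m) x w.

(* 𝔾_m : generated by the 180-degree rotations about (1/2,1/2) and
   (m-1/2,m-1/2), i.e. the diagonal action of G_m on R^2. *)
Definition actP (R : realType) (m : nat) (w : Gword) (p : R * R) : R * R :=
  (actR m w p.1, actR m w p.2).

Definition Gorb (m : nat) (a b : int) : Prop := exists w : Gword, b = actZ m w a.

(* f is a total function int -> int; only its values on S matter.      *)

Definition num_orbits (m : nat) (S : set int) (k : nat) : Prop :=
  exists r : seq int,
    [/\ size r = k,
        (forall a, a \in r -> S a),
        (forall i j, (i < size r)%N -> (j < size r)%N ->
             Gorb m (nth 0 r i) (nth 0 r j) -> i = j)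
      & (forall s, S s -> exists2 a, a \in r & Gorb m a s)].

Definition lifted_pperm (m k : nat) (S : set int) (f : int -> int) : Prop :=
  [/\
      (forall w s, S s -> S (actZ m w s)),
      num_orbits m S k,
      (forall w s, S s -> f (actZ m w s) = actZ m w (f s))
    &
      (forall a b, S a -> S b -> Gorb m (f a) (f b) -> Gorb m a b)].

Definition crossing_set (R : realType) (S : set int) (f : int -> int) (j : int)
  : set int :=
  [set i | S i /\
     (((i%:~R : R) < j%:~R - 2^-1 /\ j%:~R - 2^-1 < ((f i)%:~R : R)) \/
      ((i%:~R : R) > j%:~R - 2^-1 /\ j%:~R - 2^-1 > ((f i)%:~R : R)))].

Definition wt (R : realType) (S : set int) (f : int -> int) (j : int) : R :=
  (#|` fset_set (crossing_set R S f j)|)%:R / 2.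

Definition composable (m k : nat) (S : set int) (f : int -> int)
  (T : set int) (g : int -> int) : Prop :=
  [/\ lifted_pperm m k S f, lifted_pperm m k T g, T = f @` S
    & lifted_pperm m k S (g \o f)].

(* The Heegaard triple (in the universal cover R^2).                   *)

Definition alpha_line (R : realType) (s : int) (p : R * R) : Prop := p.1 = s%:~R.
Definition gamma_line (R : realType) (u : int) (p : R * R) : Prop := p.2 = u%:~R.
Definition beta_line (R : realType) (c : int -> R) (l : int) (p : R * R) : Prop :=
  p.1 + p.2 = c l.
Definition diagonal (R : realType) (p : R * R) : Prop := p.1 = p.2.

Definition beta_family (R : realType) (m : nat) (c : int -> R) : Prop :=
  [/\ (* slope -1 lines, beta_l crosses the diagonal strictly between
         (l-1/2,l-1/2) and (l+1/2,l+1/2) *)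
      (forall l : int, l%:~R - 2^-1 < c l / 2 < l%:~R + 2^-1),
      (forall (w : Gword) (l : int), exists l' : int,
         forall p, beta_line c l p -> beta_line c l' (actP m w p))
    &
      (forall (s l : int) (p : R * R),
         ~ (alpha_line s p /\ beta_line c l p /\ diagonal p))].

(* Lifts of Heegaard states, corresponding to (S,f) as in the paper. *)
Definition liftAB (R : realType) (c : int -> R) (S : set int) (f : int -> int)
  : set (R * R) :=
  [set p | exists s, S s /\ alpha_line s p /\ beta_line c (f s) p].
Definition liftBG (R : realType) (c : int -> R) (T : set int) (g : int -> int)
  : set (R * R) :=
  [set p | exists t, T t /\ beta_line c t p /\ gamma_line (g t) p].
Definition liftAG (R : realType) (S : set int) (h : int -> int) : set (R * R) :=
  [set p | exists s, S s /\ alpha_line s p /\ gamma_line (h s) p].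

Definition stateAB (R : realType) (m k : nat) (c : int -> R) (X : set (R * R)) :=
  exists S f, lifted_pperm m k S f /\ X = liftAB c S f.
Definition stateBG (R : realType) (m k : nat) (c : int -> R) (Y : set (R * R)) :=
  exists T g, lifted_pperm m k T g /\ Y = liftBG c T g.
Definition stateAG (R : realType) (m k : nat) (Z : set (R * R)) :=
  exists S h, lifted_pperm m k S h /\ Z = liftAG S h.

(* Triangles.  A triangle with sides on alpha_s, beta_t, gamma_u is    *)
(* encoded by (s,t,u); its corners are                                 *)
(*   X = alpha_s /\ beta_t, Y = beta_t /\ gamma_u, Z = alpha_s /\ gamma_u. *)

Definition tri := (int * int * int)%type.
Definition tri_s (T : tri) : int := T.1.1.
Definition tri_t (T : tri) : int := T.1.2.
Definition tri_u (T : tri) : int := T.2.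

Definition cornerX (R : realType) (c : int -> R) (T : tri) : R * R :=
  ((tri_s T)%:~R, c (tri_t T) - (tri_s T)%:~R).
Definition cornerY (R : realType) (c : int -> R) (T : tri) : R * R :=
  (c (tri_t T) - (tri_u T)%:~R, (tri_u T)%:~R).
Definition cornerZ (R : realType) (T : tri) : R * R :=
  ((tri_s T)%:~R, (tri_u T)%:~R).

(* signed area (twice) of the triangle p q r; > 0 iff counterclockwise *)
Definition orient (R : realType) (p q r : R * R) : R :=
  (q.1 - p.1) * (r.2 - p.2) - (q.2 - p.2) * (r.1 - p.1).

Definition good_tri (R : realType) (c : int -> R) (T : tri) : Prop :=
  orient (cornerX c T) (cornerY c T) (cornerZ R T) < 0.

Definition tri_region (R : realType) (c : int -> R) (T : tri) : set (R * R) :=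
  [set p | exists a b d : R, [/\ 0 <= a, 0 <= b, 0 <= d, a + b + d = 1 &
     p = (a * (cornerX c T).1 + b * (cornerY c T).1 + d * (cornerZ R T).1,
          a * (cornerX c T).2 + b * (cornerY c T).2 + d * (cornerZ R T).2)]].

Definition tri_witness (R : realType) (m k : nat) (c : int -> R)
  (X Y Z : set (R * R)) (tris : seq tri) : Prop :=
  [/\ size tris = k,
      (forall T, T \in tris -> good_tri c T),
      X = [set p | exists2 T, T \in tris & exists w, p = actP m w (cornerX c T)],
      Y = [set p | exists2 T, T \in tris & exists w, p = actP m w (cornerY c T)]
    & Z = [set p | exists2 T, T \in tris & exists w, p = actP m w (cornerZ R T)]].

Definition tri_connected (R : realType) (m k : nat) (c : int -> R)
  (X Y Z : set (R * R)) : Prop :=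
  exists tris, tri_witness m k c X Y Z tris.

(* Multiplicity at a point q of the two-chain psi in H = R^2/𝔾_m obtained as
   the quotient of the triangles tris: the number of lifts of q lying in the
   triangles, summed over the triangles. *)
Definition mult_at (R : realType) (m : nat) (c : int -> R) (tris : seq tri)
  (q : R * R) : nat :=
  \sum_(T <- tris)
     #|` fset_set [set q' | (exists w, q' = actP m w q) /\ tri_region c T q'] |.

(* Q_2(j - 1/2) = i *)
Definition Q2 (m : nat) (j : int) (i : int) : Prop :=
  [/\ 1 <= i, i <= m%:Z &
      ((i == j %[mod (2 * m%:Z - 2)])%Z \/ (i == 2 - j %[mod (2 * m%:Z - 2)])%Z)].

(* n_{O_i}(psi) = n : at every lift (j-1/2, j-1/2) of the puncture O_i
   (i.e. Q_2(j-1/2) = i), the multiplicity of psi on a punctured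
   neighbourhood of that lift is n. *)
Definition local_mult (R : realType) (m : nat) (c : int -> R) (tris : seq tri)
  (i : int) (n : nat) : Prop :=
  forall j : int, Q2 m j i ->
    let p : R * R := (j%:~R - 2^-1, j%:~R - 2^-1) in
    exists2 e : R, 0 < e & forall q : R * R, q <> p ->
      `|q.1 - p.1| < e -> `|q.2 - p.2| < e -> mult_at m c tris q = n.

Arguments liftAG R S h _ : clear implicits.
Arguments stateAG R m k Z : clear implicits.

(* Every element of G_m acts on Z (and on R) either as x |-> x + nL or as
   x |-> 1 - x + nL, where L = 2m - 2 is the period; this normal form drives
   the whole proof.  The pointwise identity
       cross(s,t) + cross(t,u) = cross(s,u) + 2 sep(s,t,u)
     then gives the multiplicity formula.
   - Triangles: the triangle (s, f s, g (f s)) over orbit representatives s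
     witnesses triangular connectedness, and conversely the corners of any
     witness force T = f(S) and h = g o f. *)
From HB Require Import structures.
From mathcomp Require Import all_boot all_order all_algebra.
From mathcomp Require Import finmap all_classical all_reals.
From mathcomp Require Import zify ring lra.
Set Implicit Arguments.
Unset Strict Implicit.
Unset Printing Implicit Defensive.
Import Order.TTheory GRing.Theory Num.Theory.
Local Open Scope classical_set_scope.
Local Open Scope ring_scope.

Definition period (m : nat) : int := 2 * m%:Z - 2.

Definition gZ (m : nat) (b : bool) (n : int) (x : int) : int :=
  if b then 1 - x + n * period m else x + n * period m.
Definition gR (R : realType) (m : nat) (b : bool) (n : int) (x : R) : R :=
  if b then 1 - x + (n * period m)%:~R else x + (n * period m)%:~R.

(* The induced action on the coordinate sum x + y of a point of R^2. *)
Definition gsum (R : realType) (m : nat) (b : bool) (n : int) (y : R) : R :=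
  if b then 2 - y + (2 * (n * period m))%:~R else y + (2 * (n * period m))%:~R.

Definition realizes (R : realType) (m : nat) (w : Gword) (b : bool) (n : int) :=
  (forall x, actZ m w x = gZ m b n x) /\ (forall x : R, actR m w x = gR m b n x).

Section NormalForm.
Variables (R : realType) (m : nat).

Lemma realizes_nil : realizes R m [::] false 0.
Proof. by split => x /=; rewrite /gZ /gR mul0r ?add0r addr0. Qed.

(* Composing with a generator: sigma1 is x |-> 1 - x, sigma2 is
   x |-> 1 - x + L. *)
Lemma realizes_cons (g : bool) w b n : realizes R m w b n ->
  realizes R m (g :: w) (~~ b) (- n + (if g then 1 else 0)).
Proof.
move=> [HZ HR]; split => x /=; rewrite ?HZ ?HR /genZ /genR /gZ /gR; clear HZ HR.
  by case: g; case: b => /=; rewrite /period; ring.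
have hm : ((m%:Z)%:~R : R) = m%:R by [].
by case: g; case: b => /=; rewrite /period ?(intrM, intrD, intrB, intrN) hm /=; ring.
Qed.

Lemma word_normal_form (w : Gword) : exists b n, realizes R m w b n.
Proof.
elim: w => [|g w [b [n Hw]]]; first by exists false, 0; exact: realizes_nil.
by exists (~~ b), (- n + (if g then 1 else 0)); exact: realizes_cons.
Qed.

Lemma normal_form_word b n : exists w, realizes R m w b n.
Proof.
have shiftP w n' : realizes R m w false n' ->
    realizes R m [:: true, false & w] false (n' + 1).
  move=> /(realizes_cons false) /(realizes_cons true) /=.
  by congr realizes; lia.
have shiftN w n' : realizes R m w false n' ->
    realizes R m [:: false, true & w] false (n' - 1).
  move=> /(realizes_cons true) /(realizes_cons false) /=.
  by congr realizes; lia.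
have [w Hw] : exists w, realizes R m w false (if b then - n else n).
  elim/int_rec: (if b then - n else n) => [|k [w Hw]|k [w Hw]].
  - by exists [::]; exact: realizes_nil.
  - by exists [:: true, false & w]; move: (shiftP _ _ Hw); congr realizes; lia.
  - by exists [:: false, true & w]; move: (shiftN _ _ Hw); congr realizes; lia.
case: b Hw => Hw; last by exists w.
by exists (false :: w); move: (realizes_cons false Hw) => /=; congr realizes; lia.
Qed.

End NormalForm.

Lemma gR_int (R : realType) m b n (x : int) :
  gR m b n (x%:~R : R) = (gZ m b n x)%:~R.
Proof. by rewrite /gR /gZ; case: b; rewrite ?(intrD, intrB, intrN). Qed.

Lemma gR_sum (R : realType) m b n (x y : R) :
  gR m b n (x - y) + gR m b n y = gsum m b n x.
Proof. by rewrite /gR /gsum; case: b; rewrite ?(intrD, intrM) /=; ring. Qed.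

Definition orbZ (m : nat) (x : int) : set int := [set y | exists b n, y = gZ m b n x].

Lemma GorbE (R : realType) m a b : Gorb m a b <-> orbZ m a b.
Proof.
split; first by move=> [w ->]; have [bb [n [HZ _]]] := word_normal_form R m w; exists bb, n.
by move=> [bb [n ->]]; have [w [HZ _]] := normal_form_word R m bb n; exists w.
Qed.

Lemma actP_orbit (R : realType) m (q q' : R * R) :
  (exists w, q' = actP m w q) <-> exists b n, q' = (gR m b n q.1, gR m b n q.2).
Proof.
split; first by move=> [w ->]; have [b [n [_ HR]]] := word_normal_form R m w;
  exists b, n; rewrite /actP !HR.
by move=> [b [n ->]]; have [w [_ HR]] := normal_form_word R m b n; exists w; rewrite /actP !HR.
Qed.

Lemma eqz_modP (L a b : int) : (a == b %[mod L])%Z <-> exists n, a = b + n * L.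
Proof.
rewrite eqz_mod_dvd; split => [/dvdzP [q hq]|[n ->]]; first by exists q; lia.
by apply/dvdzP; exists n; lia.
Qed.

(* A canonical representative of the orbit of x: x and 1 - x are the two
   residues mod L that the orbit meets. *)
Definition orbit_key (m : nat) (x : int) : int :=
  Order.min (x %% period m)%Z ((1 - x) %% period m)%Z.

Lemma orbit_keyP m x y : orbit_key m x = orbit_key m y <-> orbZ m x y.
Proof.
have modE a b : (a %% period m)%Z = (b %% period m)%Z <-> exists n, a = b + n * period m.
  by rewrite -eqz_modP; split => [->|/eqP].
have keyE z : orbit_key m z = (z %% period m)%Z \/ orbit_key m z = ((1 - z) %% period m)%Z.
  by rewrite /orbit_key /Order.min; case: ifP; [left|right].
split => [E|[bb [n ->]]].
  case: (keyE x) => Hx; case: (keyE y) => Hy; rewrite Hx Hy in E;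
    have [n En] := proj1 (modE _ _) E.
  - by exists false, (- n); rewrite /gZ; lia.
  - by exists true, n; rewrite /gZ; lia.
  - by exists true, (- n); rewrite /gZ; lia.
  - by exists false, n; rewrite /gZ; lia.
have E1 : ((x + n * period m) %% period m)%Z = (x %% period m)%Z.
  by apply/modE; exists n.
have E2 : ((1 - (x + n * period m)) %% period m)%Z = ((1 - x) %% period m)%Z.
  by apply/modE; exists (- n); ring.
rewrite /orbit_key /gZ; case: bb; last by rewrite E1 E2.
have E3 : ((1 - x + n * period m) %% period m)%Z = ((1 - x) %% period m)%Z.
  by apply/modE; exists n.
have E4 : ((1 - (1 - x + n * period m)) %% period m)%Z = (x %% period m)%Z.
  by apply/modE; exists (- n); ring.
by rewrite E3 E4 minC.
Qed.

Lemma odd_window_uniq (R : realType) (y : R) l l' :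
  (2 * l - 1)%:~R < y -> y < (2 * l + 1)%:~R ->
  (2 * l' - 1)%:~R < y -> y < (2 * l' + 1)%:~R -> l = l'.
Proof.
move=> h1 h2 h3 h4.
have : (2 * l - 1)%:~R < ((2 * l' + 1)%:~R : R) by apply: lt_trans h4.
have : (2 * l' - 1)%:~R < ((2 * l + 1)%:~R : R) by apply: lt_trans h2.
rewrite !ltr_int; lia.
Qed.

Lemma gsum_window (R : realType) m b n (y : R) l :
  (2 * l - 1)%:~R < y -> y < (2 * l + 1)%:~R ->
  (2 * gZ m b n l - 1)%:~R < gsum m b n y /\ gsum m b n y < (2 * gZ m b n l + 1)%:~R.
Proof.
rewrite /gsum /gZ; case: b; rewrite !(intrD, intrB, intrM, intrN) /= => *; split; lra.
Qed.

Section BetaFamily.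
Variables (R : realType) (m : nat) (c : int -> R).
Hypothesis hc : beta_family m c.

(* beta_l crosses the diagonal at (c l / 2, c l / 2). *)
Lemma beta_window l : (2 * l - 1)%:~R < c l /\ c l < (2 * l + 1)%:~R.
Proof.
case: hc => H _ _; have /andP[h1 h2] := H l.
rewrite !(intrD, intrB, intrM) /=; split; lra.
Qed.

Lemma beta_inj l l' : c l = c l' -> l = l'.
Proof.
move=> E; have [h1 h2] := beta_window l; have [h3 h4] := beta_window l'.
by apply: (odd_window_uniq h1 h2); rewrite E.
Qed.

(* beta_l meets the diagonal at (c l / 2, c l / 2); if c l were an integer
   it would be 2l and alpha_l would pass through that point too. *)
Lemma beta_not_int l z : c l <> z%:~R.
Proof.
move=> E; have [h1 h2] := beta_window l; rewrite E !ltr_int in h1 h2.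
have ez : z = 2 * l by lia.
case: hc => _ _ H; apply: (H l l (l%:~R, l%:~R)).
rewrite /alpha_line /beta_line /diagonal /=; split => //; split => //.
by rewrite E ez intrM /=; ring.
Qed.

Lemma beta_equiv b n l : c (gZ m b n l) = gsum m b n (c l).
Proof.
have [w [_ HR]] := normal_form_word R m b n.
case: hc => _ H _; have [l' Hl'] := H w l.
have := Hl' (0, c l); rewrite /beta_line /actP /= !HR add0r => /(_ erefl) E.
have E' : c l' = gsum m b n (c l).
  by rewrite -E /gR /gsum; case: b {HR Hl' E}; rewrite !(intrD, intrM) /=; ring.
have [h1 h2] := beta_window l; have [h3 h4] := gsum_window m b n h1 h2.
have [h5 h6] := beta_window l'; rewrite E' in h5 h6.
by rewrite (odd_window_uniq h3 h4 h5 h6).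
Qed.

(* Every triangle with sides on alpha, beta and gamma lines of the family is
   nondegenerate and correctly oriented: its orientation is -(c t - s - u)^2. *)
Lemma good_tri_all Tr : good_tri c Tr.
Proof.
rewrite /good_tri.
set D := c (tri_t Tr) - (tri_s Tr + tri_u Tr)%:~R.
have -> : orient (cornerX c Tr) (cornerY c Tr) (cornerZ R Tr) = - (D * D).
  by rewrite /orient /cornerX /cornerY /cornerZ /D /= intrD; ring.
have hD : D != 0 by rewrite subr_eq0; apply/eqP; apply: beta_not_int.
by rewrite oppr_lt0 -expr2 exprn_even_gt0.
Qed.

End BetaFamily.

Lemma card_fset_count (T : choiceType) (s : seq T) (P : pred T) :
  uniq s -> (forall x, P x -> x \in s) ->
  #|` fset_set [set x | P x]| = count P s.
Proof.
elim: s P => [|x s IH] P /=.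
  move=> _ HP; have -> : [set x | P x] = set0 by apply/seteqP; split => y //= /HP.
  by rewrite fset_set0 cardfs0.
move=> /andP[xs us] HP.
have fin (Q : pred T) : (forall y, Q y -> y \in s) -> finite_set [set y | Q y].
  move=> HQ; apply: (@sub_finite_set _ _ [set` s]); last exact: finite_seq.
  by move=> y /= /HQ.
case Px: (P x); last first.
  rewrite add0n IH // => y Py; have := HP y Py; rewrite inE => /orP[/eqP e|//].
  by rewrite -e Py in Px.
pose Q y := P y && (y != x).
have HQ y : Q y -> y \in s.
  by case/andP => /HP; rewrite inE => /orP[/eqP->|//]; rewrite eqxx.
have -> : [set y | P y] = x |` [set y | Q y].
  apply/seteqP; split => y /=; last by case => [->|/andP[]].
  by case: (eqVneq y x) => [->|ne] Py; [left|right; rewrite /Q Py ne].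
have xQ : x \notin fset_set [set y | Q y].
  by apply/negP; rewrite (in_fset_set (fin _ HQ)) in_setE /= /Q eqxx andbF.
rewrite fset_setU1; last exact: fin.
rewrite cardfsU1 xQ IH //; congr (_ + _)%N; apply: eq_in_count => y ys; rewrite /Q.
by case: (eqVneq y x) => [e|]; [rewrite -e ys in xs | rewrite andbT].
Qed.

Definition int_range (lo : int) (N : nat) : seq int :=
  [seq lo + 1 + i%:Z | i <- iota 0 N].

Lemma int_range_uniq lo N : uniq (int_range lo N).
Proof. by rewrite /int_range map_inj_uniq ?iota_uniq // => i j; lia. Qed.

Lemma mem_int_range (lo : int) (N : nat) (J : int) :
  lo < J -> J <= lo + N%:Z -> J \in int_range lo N.
Proof.
move=> h1 h2; apply/mapP; exists (absz (J - lo - 1)%R); last by lia.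
by rewrite mem_iota; lia.
Qed.

Lemma finite_bounded (P : int -> bool) (lo hi : int) :
  (forall J, P J -> lo < J <= hi) -> finite_set [set J | P J].
Proof.
move=> H; apply: (@sub_finite_set _ _ [set` int_range lo (absz (hi - lo)%R)]).
  by move=> J /= /H /andP[h1 h2]; apply: mem_int_range => //; lia.
exact: finite_seq.
Qed.

Lemma card_disjU (T : choiceType) (A B : set T) :
  finite_set A -> finite_set B -> A `&` B = set0 ->
  #|` fset_set (A `|` B)| = (#|` fset_set A| + #|` fset_set B|)%N.
Proof.
move=> fA fB AB; rewrite fset_setU // cardfsU -fset_setI // AB fset_set0.
by rewrite cardfs0 subn0.
Qed.

Lemma card_union_img (T : choiceType) (A1 A2 : set int) (f1 f2 : int -> T) :
  finite_set A1 -> finite_set A2 -> injective f1 -> injective f2 ->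
  (forall a1 a2, A1 a1 -> A2 a2 -> f1 a1 <> f2 a2) ->
  #|` fset_set (f1 @` A1 `|` f2 @` A2)| = (#|` fset_set A1| + #|` fset_set A2|)%N.
Proof.
move=> fA1 fA2 i1 i2 D.
have disj : f1 @` A1 `&` f2 @` A2 = set0.
  by apply/seteqP; split => // z [[a1 h1 <-] [a2 h2 /esym /(D _ _ h1 h2)]].
rewrite card_disjU ?disj //; try exact: finite_image.
by rewrite !fset_set_image // !card_imfset.
Qed.

Lemma card_union_orbits m (l : seq int) (A : set int) :
  uniq (map (orbit_key m) l) ->
  A `<=` (fun y => exists2 x, x \in l & orbZ m x y) ->
  (forall x, x \in l -> finite_set (A `&` orbZ m x)) ->
  finite_set A /\
  #|` fset_set A| = (\sum_(x <- l) #|` fset_set (A `&` orbZ m x)|)%N.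
Proof.
elim: l A => [|x l IH] A /=.
  move=> _ HA _; have -> : A = set0 by apply/seteqP; split => // y /HA [z].
  by rewrite fset_set0 cardfs0 big_nil.
move=> /andP[nx ul] HA Hfin.
pose A' := A `\` orbZ m x.
have disj y z : y \in l -> orbZ m x z -> orbZ m y z -> False.
  move=> yl /orbit_keyP e1 /orbit_keyP e2; move: nx.
  by rewrite e1 -e2 (map_f (orbit_key m) yl).
have EA' y : y \in l -> A' `&` orbZ m y = A `&` orbZ m y.
  move=> yl; apply/seteqP; split => z; first by case=> -[].
  by move=> [Az oz]; split => //; split => // ox; exact: (disj y z yl ox oz).
have [finA' cardA'] : finite_set A' /\
    #|` fset_set A'| = (\sum_(y <- l) #|` fset_set (A' `&` orbZ m y)|)%N.
  apply: IH => // [z [Az nz]|y yl].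
    by have [y] := HA z Az; rewrite inE => /orP[/eqP ->|yl] oy //; exists y.
  by rewrite EA' //; apply: Hfin; rewrite inE yl orbT.
have fin1 : finite_set (A `&` orbZ m x) by apply: Hfin; rewrite inE eqxx.
have AE : A = (A `&` orbZ m x) `|` A'.
  apply/seteqP; split => z; last by case=> -[].
  by move=> Az; case: (pselect (orbZ m x z)) => oz; [left|right].
split; first by rewrite AE finite_setU.
rewrite {1}AE card_disjU //; last by apply/seteqP; split => // z [[_ oz] [_ noz]].
rewrite big_cons cardA'; congr (_ + _)%N.
by apply: eq_big_seq => y yl; rewrite EA'.
Qed.

(* Crossings.  [cross a b J]: the half-integer J - 1/2 lies between a and b;
   [sep s t u J]: the puncture (J - 1/2, J - 1/2) lies inside the triangle
   with sides on alpha_s, beta_t, gamma_u (see [region_sep]). *)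
Definition cross (a b J : int) : bool :=
  ((a < J) && (J <= b)) || ((b < J) && (J <= a)).
Definition sep (s t u J : int) : bool :=
  ((s < J) && (u < J) && (J <= t)) || ((t < J) && (J <= s) && (J <= u)).

Definition class_count (m : nat) (j : int) (P : int -> bool) : nat :=
  #|` fset_set [set J : int | (J == j %[mod period m])%Z && P J]|.

Lemma count_pointwise_identity (T : eqType) (P Q P' Q' : pred T) (s : seq T) :
  (forall x, P x + Q x = P' x + 2 * Q' x)%N ->
  (count P s + count Q s = count P' s + 2 * count Q' s)%N.
Proof. by move=> H; elim: s => //= x s IH; have := H x; lia. Qed.

(* The pointwise identity behind the weight formula, summed over a class:
   J - 1/2 lies between s and u, or it lies on both or on neither of the
   segments [s,t], [t,u]; the latter happens exactly when it separates. *)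
Lemma class_count_identity m j s t u :
  (class_count m j (cross s t) + class_count m j (cross t u) =
   class_count m j (cross s u) + 2 * class_count m j (sep s t u))%N.
Proof.
pose lo := Order.min s (Order.min t u); pose hi := Order.max s (Order.max t u).
have HW (J : int) : lo < J <= hi -> J \in int_range lo (absz (hi - lo)%R).
  by case/andP => h1 h2; apply: mem_int_range => //; lia.
rewrite /class_count !(@card_fset_count _ (int_range lo (absz (hi - lo)%R)))
  ?int_range_uniq //.
all: try (move=> J /andP[_]; rewrite /cross /sep => H; apply: HW; rewrite /lo /hi; lia).
apply: count_pointwise_identity => J.
by case: (J == j %[mod period m])%Z => /=; rewrite /cross /sep; lia.
Qed.

Lemma class_count_mod m a b P :
  (a == b %[mod period m])%Z -> class_count m a P = class_count m b P.
Proof.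
move=> /eqP E; rewrite /class_count; congr (#|` fset_set _|).
by apply/seteqP; split => J /=; rewrite E.
Qed.

(* The number of lifts J - 1/2 of the puncture O_{Q_2(j - 1/2)} satisfying
   P: the integers J = j or J = 2 - j mod L. *)
Definition puncture_count (m : nat) (j : int) (P : int -> bool) : nat :=
  (class_count m j P + class_count m (2 - j) P)%N.

Lemma puncture_count_identity m j s t u :
  (puncture_count m j (cross s t) + puncture_count m j (cross t u) =
   puncture_count m j (cross s u) + 2 * puncture_count m j (sep s t u))%N.
Proof.
have := class_count_identity m j s t u; have := class_count_identity m (2 - j) s t u.
rewrite /puncture_count; lia.
Qed.

Lemma puncture_count_Q2 m i j P : Q2 m j i -> puncture_count m j P = puncture_count m i P.
Proof.
rewrite /puncture_count; case=> _ _ [] /eqz_modP [n En].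
  rewrite (@class_count_mod m j i); last first.
    by apply/eqz_modP; exists (- n); rewrite En /period; ring.
  rewrite (@class_count_mod m (2 - j) (2 - i)) //.
  by apply/eqz_modP; exists n; rewrite En /period; ring.
rewrite addnC (@class_count_mod m j (2 - i)); last first.
  by apply/eqz_modP; exists n; rewrite En /period; ring.
rewrite (@class_count_mod m (2 - j) i) //.
by apply/eqz_modP; exists (- n); rewrite En /period; ring.
Qed.

Section HalfIntegers.
Variable R : realType.

Lemma lt_half (a j : int) : ((a%:~R : R) < j%:~R - 2^-1) <-> (a < j).
Proof.
split => H; first by rewrite -(ltr_int R); lra.
have : (a%:~R : R) <= (j - 1)%:~R by rewrite ler_int; lia.
rewrite intrB /=; lra.
Qed.

Lemma half_lt (a j : int) : (j%:~R - 2^-1 < (a%:~R : R)) <-> (j <= a).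
Proof.
split => H; last by rewrite -(ler_int R) in H; lra.
rewrite leNgt; apply/negP => H'.
have : (a%:~R : R) <= (j - 1)%:~R by rewrite ler_int; lia.
rewrite intrB /=; lra.
Qed.

Lemma crossing_setE (S : set int) (f : int -> int) j :
  crossing_set R S f j = [set i | S i /\ cross i (f i) j].
Proof.
apply/seteqP; split => i /= [Si H]; split => //.
  rewrite /cross; case: H => [[/lt_half h1 /half_lt h2]|[/half_lt h1 /lt_half h2]].
    by rewrite h1 h2.
  by rewrite h1 h2 orbT.
case/orP: H => /andP[h1 h2].
  by left; split; [apply/lt_half|apply/half_lt].
by right; split; [apply/half_lt|apply/lt_half].
Qed.

End HalfIntegers.

Lemma cross_shift a b J n : cross (a + n) (b + n) J = cross a b (J - n).
Proof. by rewrite /cross; apply/idP/idP; lia. Qed.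

Lemma cross_refl a b J n : cross (1 - a + n) (1 - b + n) J = cross a b (2 - J + n).
Proof. by rewrite /cross; apply/idP/idP; lia. Qed.

(* The crossings of h along the orbit of x: the orbit point gZ false n x
   crosses j - 1/2 iff x crosses J - 1/2 with J = j - nL, and gZ true n x
   does iff x crosses J - 1/2 with J = 2 - j + nL. *)
Section OrbitCrossings.
Variables (m : nat) (S : set int) (h : int -> int) (x j : int).
Hypotheses (Sx : S x) (Sinv : forall b n y, S y -> S (gZ m b n y)).
Hypothesis heq : forall b n, h (gZ m b n x) = gZ m b n (h x).

Let crossings := [set i | S i /\ cross i (h i) j].
Let P1 := [set J : int | (J == j %[mod period m])%Z && cross x (h x) J].
Let P2 := [set J : int | (J == 2 - j %[mod period m])%Z && cross x (h x) J].

Lemma orbit_crossingsE : crossings `&` orbZ m x =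
  (fun J => x + (j - J)) @` P1 `|` (fun J => J + j - x - 1) @` P2.
Proof.
apply/seteqP; split => i.
  move=> [[Si Hc] [b [n ei]]]; rewrite ei heq in Hc.
  case: b ei Hc => ei; rewrite /gZ => Hc.
    right; exists (2 - j + n * period m); last by rewrite ei /gZ /=; ring.
    rewrite /= cross_refl in Hc; rewrite /P2 /= Hc andbT.
    by apply/eqz_modP; exists n.
  left; exists (j - n * period m); last by rewrite ei /gZ /=; ring.
  rewrite /= cross_shift in Hc; rewrite /P1 /= Hc andbT.
  by apply/eqz_modP; exists (- n); ring.
case => -[J /andP[/eqz_modP [n En] Hc] <-].
  have ei : x + (j - J) = gZ m false (- n) x by rewrite /gZ En; ring.
  split; last by exists false, (- n).
  rewrite /crossings /= ei; split; first exact: Sinv.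
  by rewrite heq /gZ cross_shift; move: Hc; rewrite En; congr cross; ring.
have ei : J + j - x - 1 = gZ m true n x by rewrite /gZ En; ring.
split; last by exists true, n.
rewrite /crossings /= ei; split; first exact: Sinv.
by rewrite heq /gZ cross_refl; move: Hc; rewrite En; congr cross; ring.
Qed.

Hypothesis hm : (1 < m)%N.

Lemma orbit_crossing_card : finite_set (crossings `&` orbZ m x) /\
  #|` fset_set (crossings `&` orbZ m x)| = puncture_count m j (cross x (h x)).
Proof.
have bounded j' : finite_set [set J : int | (J == j' %[mod period m])%Z && cross x (h x) J].
  apply: (@finite_bounded _ (Order.min x (h x)) (Order.max x (h x))) => J /andP[_].
  by rewrite /cross; lia.
rewrite orbit_crossingsE /puncture_count; split.
  by rewrite finite_setU; split; apply: finite_image; apply: bounded.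
apply: card_union_img; [exact: bounded | exact: bounded | | |]; try by move=> a b /=; lia.
move=> a1 a2 /andP[/eqz_modP[n1 E1] _] /andP[/eqz_modP[n2 E2] _] E.
have : (n1 + n2) * period m = 2 * ((n1 + n2) * (m%:Z - 1)) by rewrite /period; ring.
lia.
Qed.

End OrbitCrossings.

Lemma crossing_card (R : realType) m (S : set int) (h : int -> int) (l : seq int) j :
  (1 < m)%N -> uniq (map (orbit_key m) l) -> (forall x, x \in l -> S x) ->
  (forall y, S y -> exists2 x, x \in l & orbZ m x y) ->
  (forall b n y, S y -> S (gZ m b n y)) ->
  (forall b n y, S y -> h (gZ m b n y) = gZ m b n (h y)) ->
  #|` fset_set (crossing_set R S h j)| =
  (\sum_(x <- l) puncture_count m j (cross x (h x)))%N.
Proof.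
move=> hm ul lS cov inv eqv; rewrite crossing_setE.
have piece x (xl : x \in l) :=
  @orbit_crossing_card m S h x j (lS x xl) inv (fun b n => eqv b n x (lS x xl)) hm.
have [_ ->] := @card_union_orbits m l [set i | S i /\ cross i (h i) j] ul
  (fun y Hy => cov y Hy.1) (fun x xl => (piece x xl).1).
by apply: eq_big_seq => x xl; exact: (piece x xl).2.
Qed.

Section Regions.
Variables (R : realType) (c : int -> R).

Lemma lt_int1 (a b : int) : a < b -> (a%:~R : R) + 1 <= b%:~R.
Proof.
move=> H; have : (a + 1)%:~R <= (b%:~R : R) by rewrite ler_int; lia.
by rewrite intrD.
Qed.

Lemma tri_regionP (s t u : int) (q1 q2 : R) :
  tri_region c (s, t, u) (q1, q2) <->
  [/\ s%:~R <= q1, u%:~R <= q2 & q1 + q2 <= c t] \/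
  [/\ q1 <= s%:~R, q2 <= u%:~R & c t <= q1 + q2].
Proof.
rewrite /tri_region /cornerX /cornerY /cornerZ /tri_s /tri_t /tri_u /=.
set S := s%:~R; set U := u%:~R; set C := c t; set D := C - S - U.
split.
- move=> [a [b [d [a0 b0 d0 sum [E1 E2]]]]].
  have ed : d = 1 - a - b by lra.
  have Eq1 : q1 - S = b * D by rewrite E1 ed /D; ring.
  have Eq2 : q2 - U = a * D by rewrite E2 ed /D; ring.
  have Eq3 : C - (q1 + q2) = d * D by rewrite E1 E2 ed /D; ring.
  case: (lerP 0 D) => HD; [left | right].
    have := mulr_ge0 b0 HD; have := mulr_ge0 a0 HD; have := mulr_ge0 d0 HD.
    by split; lra.
  have := mulr_ge0_le0 b0 (ltW HD); have := mulr_ge0_le0 a0 (ltW HD).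
  have := mulr_ge0_le0 d0 (ltW HD).
  by split; lra.
- move=> Hsign; have [D0|DN] := eqVneq D 0.
    have [E1 E2] : q1 = S /\ q2 = U by rewrite /D in D0; case: Hsign => -[]; lra.
    exists 0, 0, 1; split; rewrite ?ler01 ?lexx //; first by rewrite !add0r.
    by rewrite E1 E2 !mul0r !add0r !mul1r.
  have ratio_ge0 x : 0 <= x * D -> 0 <= x / D.
    move=> H; have -> : x / D = x * D / (D * D) by field.
    by apply: divr_ge0 => //; rewrite -expr2 sqr_ge0.
  exists ((q2 - U) / D), ((q1 - S) / D), ((C - q1 - q2) / D); split.
  - by apply: ratio_ge0; case: Hsign => -[h1 h2 h3]; rewrite /D; nra.
  - by apply: ratio_ge0; case: Hsign => -[h1 h2 h3]; rewrite /D; nra.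
  - by apply: ratio_ge0; case: Hsign => -[h1 h2 h3]; rewrite /D; nra.
  - by rewrite /D; field.
  - by congr pair; rewrite /D; field.
Qed.

Lemma near_int_cmp (s J : int) (q : R) : J%:~R - 1 < q < J%:~R ->
  ((s%:~R <= q) = (s < J)) * ((q <= s%:~R) = (J <= s)).
Proof.
case/andP => h1 h2; case: (lerP J s) => H.
  have : (J%:~R : R) <= s%:~R by rewrite ler_int.
  by split; [apply/negbTE; rewrite -ltNge | apply/idP]; lra.
by have := lt_int1 H; split; [apply/idP | apply/negbTE; rewrite -ltNge]; lra.
Qed.

Definition beta_margin (e : R) (t : int) : Prop :=
  2 * e <= c t - (2 * t%:~R - 1) /\ 2 * e <= (2 * t%:~R + 1) - c t.

Definition puncture_near (e : R) (J : int) (q : R * R) : Prop :=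
  `|q.1 - (J%:~R - 2^-1)| < e /\ `|q.2 - (J%:~R - 2^-1)| < e.

Lemma near_beta_cmp (e y : R) (t J : int) : beta_margin e t ->
  2 * J%:~R - 1 - 2 * e < y < 2 * J%:~R - 1 + 2 * e ->
  ((y <= c t) = (J <= t)) * ((c t <= y) = (t < J)).
Proof.
move=> [E1 E2] /andP[h1 h2]; case: (lerP J t) => H.
  have : (J%:~R : R) <= t%:~R by rewrite ler_int.
  by split; [apply/idP | apply/negbTE; rewrite -ltNge]; lra.
by have := lt_int1 H; split; [apply/negbTE; rewrite -ltNge | apply/idP]; lra.
Qed.

Lemma region_sep (Tr : tri) (e : R) (J : int) (q : R * R) :
  e <= 2^-1 -> beta_margin e (tri_t Tr) -> puncture_near e J q ->
  tri_region c Tr q <-> sep (tri_s Tr) (tri_t Tr) (tri_u Tr) J.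
Proof.
case: Tr => [[s t] u]; case: q => q1 q2 eh Hm [/= N1 N2].
move: N1 N2; rewrite !ltr_norml => /andP[n1 n2] /andP[n3 n4].
have hq1 : J%:~R - 1 < q1 < J%:~R by apply/andP; split; lra.
have hq2 : J%:~R - 1 < q2 < J%:~R by apply/andP; split; lra.
have hy : 2 * J%:~R - 1 - 2 * e < q1 + q2 < 2 * J%:~R - 1 + 2 * e.
  by apply/andP; split; lra.
rewrite tri_regionP /tri_s /tri_t /tri_u /= !(near_int_cmp _ hq1) !(near_int_cmp _ hq2).
rewrite !(near_beta_cmp Hm hy) /sep.
split => [[] [-> -> ->] //=|]; first by rewrite orbT.
by case/orP => /andP[/andP[h1 h2] h3]; [left | right].
Qed.

Definition shift_pt (j J : int) (q : R * R) : R * R :=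
  (q.1 + (J - j)%:~R, q.2 + (J - j)%:~R).
Definition flip_pt (j J : int) (q : R * R) : R * R :=
  (1 - q.1 + (J - 2 + j)%:~R, 1 - q.2 + (J - 2 + j)%:~R).

Lemma orbit_shift_flip m (j : int) (q q' : R * R) : (exists w, q' = actP m w q) <->
  (exists2 J, (J == j %[mod period m])%Z & q' = shift_pt j J q) \/
  (exists2 J, (J == 2 - j %[mod period m])%Z & q' = flip_pt j J q).
Proof.
rewrite actP_orbit; split => [[[] [n ->]]|[] [J /eqz_modP [n ->] ->]].
- by right; exists (2 - j + n * period m); [apply/eqz_modP; exists n | rewrite /flip_pt /gR;
    congr pair; rewrite !(intrD, intrB, intrN, intrM); ring].
- by left; exists (j + n * period m); [apply/eqz_modP; exists n | rewrite /shift_pt /gR;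
    congr pair; rewrite !(intrD, intrB, intrN, intrM); ring].
- by exists false, n; rewrite /shift_pt /gR; congr pair;
    rewrite !(intrD, intrB, intrN, intrM); ring.
- by exists true, n; rewrite /flip_pt /gR; congr pair;
    rewrite !(intrD, intrB, intrN, intrM); ring.
Qed.

Lemma near_shift e j J q : puncture_near e j q -> puncture_near e J (shift_pt j J q).
Proof.
case=> N1 N2; split; rewrite /shift_pt /=.
  by rewrite (_ : _ - _ = q.1 - (j%:~R - 2^-1)) // intrB; ring.
by rewrite (_ : _ - _ = q.2 - (j%:~R - 2^-1)) // intrB; ring.
Qed.

Lemma near_flip e j J q : puncture_near e j q -> puncture_near e J (flip_pt j J q).
Proof.
case=> N1 N2; split; rewrite /flip_pt /=.
  by rewrite (_ : _ - _ = - (q.1 - (j%:~R - 2^-1))) ?normrN // !(intrB, intrD); field.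
by rewrite (_ : _ - _ = - (q.2 - (j%:~R - 2^-1))) ?normrN // !(intrB, intrD); field.
Qed.

Lemma shift_flip_puncture (j a1 a2 : int) (q : R * R) :
  puncture_near 2^-1 j q -> shift_pt j a1 q = flip_pt j a2 q ->
  q = (j%:~R - 2^-1, j%:~R - 2^-1).
Proof.
case: q => q1 q2 [/= N1 N2] [E1 E2].
have D1 : 2 * (q1 - (j%:~R - 2^-1)) = (a2 - a1)%:~R.
  by move: E1; rewrite !(intrB, intrD) => E1; lra.
have D2 : 2 * (q2 - (j%:~R - 2^-1)) = (a2 - a1)%:~R.
  by move: E2; rewrite !(intrB, intrD) => E2; lra.
have a12 : a2 - a1 = 0.
  move: N1; rewrite ltr_norml => /andP[n1 n2].
  have : (-1)%:~R < ((a2 - a1)%:~R : R) by rewrite -D1 /=; lra.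
  have : ((a2 - a1)%:~R : R) < 1%:~R by rewrite -D1 /=; lra.
  by rewrite !ltr_int; lia.
by move: D1 D2; rewrite a12 /= => D1 D2; congr pair; lra.
Qed.

Lemma mult_triangle_near m (Tr : tri) (e : R) (j : int) (q : R * R) :
  e <= 2^-1 -> beta_margin e (tri_t Tr) -> puncture_near e j q ->
  q <> (j%:~R - 2^-1, j%:~R - 2^-1) ->
  #|` fset_set [set q' | (exists w, q' = actP m w q) /\ tri_region c Tr q']| =
  puncture_count m j (sep (tri_s Tr) (tri_t Tr) (tri_u Tr)).
Proof.
move=> eh Hm Hq qp; set sp := sep (tri_s Tr) (tri_t Tr) (tri_u Tr).
have RS J q' := @region_sep Tr e J q' eh Hm.
have -> : [set q' | (exists w, q' = actP m w q) /\ tri_region c Tr q'] =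
    shift_pt j ^~ q @` [set J | (J == j %[mod period m])%Z && sp J] `|`
    flip_pt j ^~ q @` [set J | (J == 2 - j %[mod period m])%Z && sp J].
  apply/seteqP; split => q'.
    case=> /(@orbit_shift_flip m j) [] [J HJ ->] Hr; [left|right]; exists J => //=.
      by rewrite HJ /=; apply/(RS J _ (near_shift J Hq)).
    by rewrite HJ /=; apply/(RS J _ (near_flip J Hq)).
  case=> -[J /andP[HJ Hs] <-]; split.
  - by apply/(@orbit_shift_flip m j); left; exists J.
  - by apply/(RS J _ (near_shift J Hq)).
  - by apply/(@orbit_shift_flip m j); right; exists J.
  - by apply/(RS J _ (near_flip J Hq)).
have bounded j' : finite_set [set J | (J == j' %[mod period m])%Z && sp J].
  apply: (@finite_bounded _ (Order.min (tri_s Tr) (Order.min (tri_t Tr) (tri_u Tr)))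
    (Order.max (tri_s Tr) (Order.max (tri_t Tr) (tri_u Tr)))) => J /andP[_].
  by rewrite /sp /sep; lia.
have Hq2 : puncture_near 2^-1 j q by case: Hq => N1 N2; split; lra.
rewrite /puncture_count; apply: card_union_img; [exact: bounded | exact: bounded | | |].
- by move=> a b [/addrI /intr_inj]; lia.
- by move=> a b [/addrI /intr_inj]; lia.
- by move=> a1 a2 _ _ /(shift_flip_puncture Hq2).
Qed.

Lemma puncture_radius m (l : seq tri) : beta_family m c ->
  exists2 e : R, 0 < e & e <= 2^-1 /\ forall Tr, Tr \in l -> beta_margin e (tri_t Tr).
Proof.
move=> hc; elim: l => [|Tr l [e e0 [eh He]]].
  by exists 2^-1; [lra | split; [lra | move=> Tr; rewrite in_nil]].
have [h1 h2] := beta_window hc (tri_t Tr); rewrite ?(intrD, intrB, intrM) /= in h1 h2.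
pose d1 := (c (tri_t Tr) - (2 * (tri_t Tr)%:~R - 1)) / 2.
pose d2 := ((2 * (tri_t Tr)%:~R + 1) - c (tri_t Tr)) / 2.
exists (Order.min e (Order.min d1 d2)); first by rewrite !lt_min e0 /d1 /d2; apply/andP; split; lra.
have le1 : Order.min e (Order.min d1 d2) <= e by rewrite ge_min lexx.
have le2 : Order.min e (Order.min d1 d2) <= d1 by rewrite !ge_min lexx orbT.
have le3 : Order.min e (Order.min d1 d2) <= d2 by rewrite !ge_min lexx !orbT.
split; first lra.
move=> Tr'; rewrite inE => /orP[/eqP ->|Tl].
  by rewrite /beta_margin /d1 /d2 in le2 le3 *; split; lra.
by have [k1 k2] := He Tr' Tl; split; lra.
Qed.

End Regions.

Section LiftedPerm.
Variables (R : realType) (m k : nat) (S : set int) (f : int -> int).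
Hypothesis pf : lifted_pperm m k S f.

Lemma pperm_inv b n y : S y -> S (gZ m b n y).
Proof.
by case: pf => H _ _ _ Sy; have [w [HZ _]] := normal_form_word R m b n; rewrite -HZ; apply: H.
Qed.

Lemma pperm_equiv b n y : S y -> f (gZ m b n y) = gZ m b n (f y).
Proof.
by case: pf => _ _ H _ Sy; have [w [HZ _]] := normal_form_word R m b n; rewrite -!HZ; apply: H.
Qed.

Lemma pperm_key_inj a b : S a -> S b -> orbit_key m (f a) = orbit_key m (f b) ->
  orbit_key m a = orbit_key m b.
Proof.
case: pf => _ _ _ H Sa Sb /orbit_keyP /(GorbE R) /(H _ _ Sa Sb) /(GorbE R).
by move/orbit_keyP.
Qed.

Lemma pperm_reps : exists r : seq int, [/\ size r = k, (forall a, a \in r -> S a),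
  uniq (map (orbit_key m) r) & forall s, S s -> exists2 a, a \in r & orbZ m a s].
Proof.
case: pf => _ [r [sr rS ri rc]] _ _; exists r; split => //.
  apply/(uniqP 0) => i j; rewrite !inE size_map => hi hj.
  by rewrite !(nth_map 0) // => /orbit_keyP /(GorbE R) H; exact: ri.
by move=> s /rc [a ar /(GorbE R)]; exists a.
Qed.

End LiftedPerm.

Lemma pperm_ext m k (S : set int) (f f' : int -> int) :
  lifted_pperm m k S f -> {in S, f =1 f'} -> lifted_pperm m k S f'.
Proof.
move=> [H1 H2 H3 H4] E.
have E' s : S s -> f' s = f s by move=> Ss; rewrite E // inE.
split => // [w s Ss|a b Sa Sb]; rewrite !E' //; [exact: H3 | exact: H1 | exact: H4].
Qed.

Section Lifts.
Variables (R : realType) (c : int -> R).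

Lemma liftAB_image (S : set int) (f : int -> int) :
  liftAB c S f = (fun s => (s%:~R, c (f s) - s%:~R)) @` S.
Proof.
apply/seteqP; split => [p [s [Ss [Ha Hb]]]|p [s Ss <-]]; exists s => //.
  by case: p Ha Hb => p1 p2; rewrite /alpha_line /beta_line /= => -> <-; congr pair; ring.
by rewrite /alpha_line /beta_line /=; split => //; split => //; ring.
Qed.

Lemma liftBG_image (T : set int) (g : int -> int) :
  liftBG c T g = (fun t => (c t - (g t)%:~R, (g t)%:~R)) @` T.
Proof.
apply/seteqP; split => [p [t [Tt [Hb Hg]]]|p [t Tt <-]]; exists t => //.
  by case: p Hb Hg => p1 p2; rewrite /beta_line /gamma_line /= => <- ->; congr pair; ring.
by rewrite /beta_line /gamma_line /=; split => //; split => //; ring.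
Qed.

Lemma liftAG_image (S : set int) (h : int -> int) :
  liftAG R S h = (fun s => (s%:~R, (h s)%:~R)) @` S.
Proof.
apply/seteqP; split => [p [s [Ss [Ha Hg]]]|p [s Ss <-]]; exists s => //.
by case: p Ha Hg => p1 p2; rewrite /alpha_line /gamma_line /= => -> ->.
Qed.

Lemma liftAG_ext (S : set int) (h h' : int -> int) :
  {in S, h =1 h'} -> liftAG R S h = liftAG R S h'.
Proof.
move=> E; rewrite !liftAG_image; apply/seteqP; split => p [s Ss <-]; exists s => //.
  by rewrite E // inE.
by rewrite E // inE.
Qed.

End Lifts.

Definition tri_act (m : nat) (b : bool) (n : int) (Tr : tri) : tri :=
  (gZ m b n (tri_s Tr), gZ m b n (tri_t Tr), gZ m b n (tri_u Tr)).

Definition tri_of (f g : int -> int) (s : int) : tri := (s, f s, g (f s)).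

Lemma tri_act0 m Tr : tri_act m false 0 Tr = Tr.
Proof. by case: Tr => [[s t] u]; rewrite /tri_act /gZ /= !mul0r !addr0. Qed.

Lemma corner_orbits (R : realType) m (K : tri -> R * R) (tris : seq tri) :
  (forall b n Tr, (gR m b n (K Tr).1, gR m b n (K Tr).2) = K (tri_act m b n Tr)) ->
  [set p | exists2 Tr, Tr \in tris & exists w, p = actP m w (K Tr)] =
  [set p | exists2 Tr, Tr \in tris & exists b n, p = K (tri_act m b n Tr)].
Proof.
move=> HK; apply/seteqP; split => p [Tr Tri].
  by move=> /actP_orbit [b [n ->]]; exists Tr => //; exists b, n; rewrite HK.
by move=> [b [n ->]]; exists Tr => //; apply/actP_orbit; exists b, n; rewrite HK.
Qed.

Lemma orbit_image (U : Type) m (S : set int) (r : seq int) (F : int -> U) :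
  (forall b n y, S y -> S (gZ m b n y)) -> (forall a, a \in r -> S a) ->
  (forall s, S s -> exists2 a, a \in r & orbZ m a s) ->
  F @` S = [set p | exists2 a, a \in r & exists b n, p = F (gZ m b n a)].
Proof.
move=> inv rS rc; apply/seteqP; split => p.
  by move=> [s /rc [a ar [b [n ->]]] <-]; exists a => //; exists b, n.
by move=> [a ar [b [n ->]]]; exists (gZ m b n a) => //; apply/inv/rS.
Qed.

Section Corners.
Variables (R : realType) (m : nat) (c : int -> R).
Hypothesis hc : beta_family m c.

(* The corners are G_m-equivariant; for the alpha-beta and beta-gamma
   corners this is the invariance of the beta family. *)
Lemma cornerX_act b n Tr :
  (gR m b n (cornerX c Tr).1, gR m b n (cornerX c Tr).2) = cornerX c (tri_act m b n Tr).
Proof.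
rewrite /cornerX /tri_act /= gR_int; congr pair.
by have := gR_sum m b n (c (tri_t Tr)) ((tri_s Tr)%:~R); rewrite gR_int -(beta_equiv hc); lra.
Qed.

Lemma cornerY_act b n Tr :
  (gR m b n (cornerY c Tr).1, gR m b n (cornerY c Tr).2) = cornerY c (tri_act m b n Tr).
Proof.
rewrite /cornerY /tri_act /= gR_int; congr pair.
by have := gR_sum m b n (c (tri_t Tr)) ((tri_u Tr)%:~R); rewrite gR_int -(beta_equiv hc); lra.
Qed.

Lemma cornerZ_act b n Tr :
  (gR m b n (cornerZ R Tr).1, gR m b n (cornerZ R Tr).2) = cornerZ R (tri_act m b n Tr).
Proof. by rewrite /cornerZ /tri_act /= !gR_int. Qed.

Lemma cornerX_inj Tr Tr' : cornerX c Tr = cornerX c Tr' ->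
  tri_s Tr = tri_s Tr' /\ tri_t Tr = tri_t Tr'.
Proof. by case=> /intr_inj es; rewrite es => /addIr /(beta_inj hc). Qed.

Lemma cornerY_inj Tr Tr' : cornerY c Tr = cornerY c Tr' ->
  tri_t Tr = tri_t Tr' /\ tri_u Tr = tri_u Tr'.
Proof. by case=> + /intr_inj eu; rewrite eu => /addIr /(beta_inj hc). Qed.

Lemma cornerZ_inj Tr Tr' : cornerZ R Tr = cornerZ R Tr' ->
  tri_s Tr = tri_s Tr' /\ tri_u Tr = tri_u Tr'.
Proof. by case=> /intr_inj -> /intr_inj ->. Qed.

End Corners.

Section Witness.
Variables (R : realType) (m k : nat) (c : int -> R).
Hypothesis hc : beta_family m c.
Variables (S : set int) (f : int -> int) (T : set int) (g : int -> int).
Variables (S' : set int) (h : int -> int) (tris : seq tri).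
Hypothesis HW : tri_witness m k c (liftAB c S f) (liftBG c T g) (liftAG R S' h) tris.

Lemma witness_cornerX p : liftAB c S f p <->
  exists2 Tr, Tr \in tris & exists b n, p = cornerX c (tri_act m b n Tr).
Proof. by case: HW => _ _ -> _ _; rewrite (corner_orbits _ (cornerX_act hc)). Qed.

Lemma witness_cornerY p : liftBG c T g p <->
  exists2 Tr, Tr \in tris & exists b n, p = cornerY c (tri_act m b n Tr).
Proof. by case: HW => _ _ _ -> _; rewrite (corner_orbits _ (cornerY_act hc)). Qed.

Lemma witness_cornerZ p : liftAG R S' h p <->
  exists2 Tr, Tr \in tris & exists b n, p = cornerZ R (tri_act m b n Tr).
Proof. by case: HW => _ _ _ _ ->; rewrite (corner_orbits _ (@cornerZ_act R m)). Qed.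

Lemma witness_triangle Tr : Tr \in tris ->
  [/\ S (tri_s Tr), tri_t Tr = f (tri_s Tr), T (tri_t Tr),
      tri_u Tr = g (tri_t Tr) & S' (tri_s Tr) /\ tri_u Tr = h (tri_s Tr)].
Proof.
move=> Tri.
have : liftAB c S f (cornerX c Tr).
  by apply/witness_cornerX; exists Tr => //; exists false, 0; rewrite tri_act0.
rewrite liftAB_image => -[s Ss /(cornerX_inj hc (Tr := (s, f s, 0))) /= [es et]].
have : liftBG c T g (cornerY c Tr).
  by apply/witness_cornerY; exists Tr => //; exists false, 0; rewrite tri_act0.
rewrite liftBG_image => -[t Tt /(cornerY_inj hc (Tr := (0, t, g t))) /= [et' eu]].
have : liftAG R S' h (cornerZ R Tr).
  by apply/witness_cornerZ; exists Tr => //; exists false, 0; rewrite tri_act0.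
rewrite liftAG_image => -[s' Ss' /(cornerZ_inj (Tr := (s', 0, h s'))) /= [es' eu']].
split; [by rewrite -es | by rewrite -es -et | by rewrite -et' | by rewrite -et' -eu |].
by split; [rewrite -es' | rewrite -es' -eu'].
Qed.

Lemma witness_coverS x : S x -> exists2 Tr, Tr \in tris & orbZ m (tri_s Tr) x.
Proof.
move=> Sx; have : liftAB c S f (x%:~R, c (f x) - x%:~R) by rewrite liftAB_image; exists x.
case/witness_cornerX => Tr Tri [b [n /(cornerX_inj hc (Tr := (x, f x, 0))) [ex _]]].
by exists Tr => //; exists b, n.
Qed.

Lemma witness_coverT y : T y -> exists2 Tr, Tr \in tris & orbZ m (tri_t Tr) y.
Proof.
move=> Ty; have : liftBG c T g (c y - (g y)%:~R, (g y)%:~R) by rewrite liftBG_image; exists y.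
case/witness_cornerY => Tr Tri [b [n /(cornerY_inj hc (Tr := (0, y, g y))) [ex _]]].
by exists Tr => //; exists b, n.
Qed.

Lemma witness_coverS' x : S' x -> exists2 Tr, Tr \in tris & orbZ m (tri_s Tr) x.
Proof.
move=> Sx; have : liftAG R S' h (x%:~R, (h x)%:~R) by rewrite liftAG_image; exists x.
case/witness_cornerZ => Tr Tri [b [n /(cornerZ_inj (Tr := (x, 0, h x))) [ex _]]].
by exists Tr => //; exists b, n.
Qed.

End Witness.

Lemma uniq_map_transfer (A B C : eqType) (l : seq A) (F : A -> B) (G : A -> C) :
  uniq (map G l) -> (forall a b, a \in l -> b \in l -> F a = F b -> G a = G b) ->
  uniq (map F l).
Proof.
elim: l => //= x l IH /andP[nx ul] H; apply/andP; split; last first.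
  by apply: IH => // a b al bl; apply: H; rewrite inE ?al ?bl orbT.
apply/negP => /mapP[y yl e]; move: nx; rewrite (H x y) ?inE ?eqxx ?yl ?orbT //.
by rewrite (map_f G yl).
Qed.

Section Correspondence.
Variables (R : realType) (m k : nat) (c : int -> R).
Hypothesis hc : beta_family m c.

Lemma liftAB_inj S f S' f' :
  liftAB c S f = liftAB c S' f' -> S = S' /\ {in S, f =1 f'}.
Proof.
have sub S1 f1 S2 f2 : liftAB c S1 f1 = liftAB c S2 f2 -> forall x, S1 x -> S2 x /\ f1 x = f2 x.
  move=> E x Sx; have : liftAB c S2 f2 (x%:~R, c (f1 x) - x%:~R).
    by rewrite -E liftAB_image; exists x.
  rewrite liftAB_image => -[s Ss].
  move=> /(cornerX_inj hc (Tr := (s, f2 s, 0)) (Tr' := (x, f1 x, 0))) [es et].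
by rewrite /tri_s /tri_t /= in es et; subst s; split.
move=> E; split; last by move=> x; rewrite inE => /(sub _ _ _ _ E) [].
by apply/seteqP; split => x Sx; [case: (sub _ _ _ _ E x Sx) | case: (sub _ _ _ _ (esym E) x Sx)].
Qed.

Lemma liftBG_inj T g T' g' :
  liftBG c T g = liftBG c T' g' -> T = T' /\ {in T, g =1 g'}.
Proof.
have sub T1 g1 T2 g2 : liftBG c T1 g1 = liftBG c T2 g2 -> forall y, T1 y -> T2 y /\ g1 y = g2 y.
  move=> E y Ty; have : liftBG c T2 g2 (c y - (g1 y)%:~R, (g1 y)%:~R).
    by rewrite -E liftBG_image; exists y.
  rewrite liftBG_image => -[t Tt].
  move=> /(cornerY_inj hc (Tr := (0, t, g2 t)) (Tr' := (0, y, g1 y))) [et eu].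
by rewrite /tri_t /tri_u /= in et eu; subst t; split.
move=> E; split; last by move=> y; rewrite inE => /(sub _ _ _ _ E) [].
by apply/seteqP; split => y Ty; [case: (sub _ _ _ _ E y Ty) | case: (sub _ _ _ _ (esym E) y Ty)].
Qed.

(* The triangles (s, f s, g (f s)), s ranging over orbit representatives of
   S, witness that the states of a composable triple are triangularly
   connected. *)
Lemma composable_connected S f T g : composable m k S f T g ->
  tri_connected m k c (liftAB c S f) (liftBG c T g) (liftAG R S (g \o f)).
Proof.
move=> [pf pg ET pgf]; have [r [sr rS ur rc]] := pperm_reps R pf.
have fT x : S x -> T (f x) by move=> Sx; rewrite ET; exists x.
have act_tri b n a : a \in r -> tri_act m b n (tri_of f g a) = tri_of f g (gZ m b n a).
  move=> ar; rewrite /tri_of /tri_act /= (pperm_equiv R pf b n (rS a ar)).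
  by rewrite (pperm_equiv R pg b n (fT a (rS a ar))).
have corners (K : tri -> R * R) :
    (forall b n Tr, (gR m b n (K Tr).1, gR m b n (K Tr).2) = K (tri_act m b n Tr)) ->
    [set p | exists2 Tr, Tr \in map (tri_of f g) r & exists w, p = actP m w (K Tr)] =
    (K \o tri_of f g) @` S.
  move=> HK; rewrite corner_orbits // (orbit_image _ (pperm_inv R pf) rS rc).
  apply/seteqP; split => p.
    by move=> [Tr /mapP[a ar ->] [b [n ->]]]; exists a => //; exists b, n; rewrite act_tri.
  move=> [a ar [b [n ->]]]; exists (tri_of f g a); first exact: map_f.
  by exists b, n; rewrite act_tri.
exists (map (tri_of f g) r); split.
- by rewrite size_map.
- by move=> Tr _; exact (good_tri_all hc Tr).
- by rewrite (corners _ (cornerX_act hc)) liftAB_image.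
- by rewrite (corners _ (cornerY_act hc)) ET liftBG_image image_comp.
- by rewrite (corners _ (@cornerZ_act R m)) liftAG_image.
Qed.

Lemma connected_composable X Y Z :
  stateAB m k c X -> stateBG m k c Y -> stateAG R m k Z -> tri_connected m k c X Y Z ->
  exists S f T g, [/\ composable m k S f T g,
    X = liftAB c S f, Y = liftBG c T g & Z = liftAG R S (g \o f)].
Proof.
move=> [S1 [f1 [pf ->]]] [T1 [g1 [pg ->]]] [S2 [h [ph ->]]] [tris HW].
have WT := witness_triangle hc HW.
have E12 : S1 = S2.
  apply/seteqP; split => x Sx.
    have [Tr Tri [b [n ->]]] := witness_coverS hc HW Sx.
    by apply: (pperm_inv R ph); have [_ _ _ _ []] := WT Tr Tri.
  have [Tr Tri [b [n ->]]] := witness_coverS' HW Sx.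
  by apply: (pperm_inv R pf); have [] := WT Tr Tri.
have Eh : {in S1, h =1 g1 \o f1}.
  move=> x; rewrite inE => Sx; have [Tr Tri [b [n ->]]] := witness_coverS hc HW Sx.
  have [Ss et Tt eu [Ss2 eu2]] := WT Tr Tri.
  rewrite /= (pperm_equiv R ph b n Ss2) -eu2 eu (pperm_equiv R pf b n Ss) -et.
  by rewrite (pperm_equiv R pg b n Tt).
have ET : T1 = f1 @` S1.
  apply/seteqP; split => y.
    move=> Ty; have [Tr Tri [b [n ->]]] := witness_coverT hc HW Ty.
    have [Ss et _ _ _] := WT Tr Tri.
    exists (gZ m b n (tri_s Tr)); first exact: (pperm_inv R pf).
    by rewrite (pperm_equiv R pf b n Ss) -et.
  move=> [x Sx <-]; have [Tr Tri [b [n ->]]] := witness_coverS hc HW Sx.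
  have [Ss et Tt _ _] := WT Tr Tri.
  by rewrite (pperm_equiv R pf b n Ss) -et; apply: (pperm_inv R pg).
exists S1, f1, T1, g1; split => //; last by rewrite -E12; apply: liftAG_ext.
by split => //; apply: (pperm_ext _ Eh); rewrite E12.
Qed.

Lemma witness_local_mult (tris : seq tri) (i : int) :
  local_mult m c tris i
    (\sum_(Tr <- tris) puncture_count m i (sep (tri_s Tr) (tri_t Tr) (tri_u Tr)))%N.
Proof.
move=> j Hj /=; have [e e0 [eh He]] := puncture_radius tris hc.
exists e => // q qp H1 H2; rewrite /mult_at; apply: eq_big_seq => Tr Tri.
by rewrite (mult_triangle_near m eh (He Tr Tri) (conj H1 H2) qp) (puncture_count_Q2 _ Hj).
Qed.

Lemma witness_crossings S f T g tris (i : int) : (1 < m)%N -> composable m k S f T g ->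
  tri_witness m k c (liftAB c S f) (liftBG c T g) (liftAG R S (g \o f)) tris ->
  [/\ #|` fset_set (crossing_set R S f i)| =
        (\sum_(Tr <- tris) puncture_count m i (cross (tri_s Tr) (tri_t Tr)))%N,
      #|` fset_set (crossing_set R T g i)| =
        (\sum_(Tr <- tris) puncture_count m i (cross (tri_t Tr) (tri_u Tr)))%N &
      #|` fset_set (crossing_set R S (g \o f) i)| =
        (\sum_(Tr <- tris) puncture_count m i (cross (tri_s Tr) (tri_u Tr)))%N].
Proof.
move=> hm [pf pg ET pgf] HW; have WT := witness_triangle hc HW.
have [r [sr rS ur rc]] := pperm_reps R pf.
have uS : uniq (map (orbit_key m) (map tri_s tris)).
  apply: (leq_size_uniq ur); last by case: HW => Hs *; rewrite !size_map sr Hs.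
  move=> z /mapP [a ar ->]; have [Tr Tri [b [n E]]] := witness_coverS hc HW (rS a ar).
  apply/mapP; exists (tri_s Tr); first exact: map_f.
  by apply/esym/orbit_keyP; exists b, n.
have uT : uniq (map (orbit_key m) (map tri_t tris)).
  rewrite -map_comp; apply: (uniq_map_transfer (G := orbit_key m \o tri_s)).
    by rewrite map_comp.
  move=> a b al bl /=; have [Sa ta _ _ _] := WT a al; have [Sb tb _ _ _] := WT b bl.
  by rewrite ta tb; apply: (pperm_key_inj R pf).
have lS x : x \in map tri_s tris -> S x by case/mapP => Tr Tri ->; have [] := WT Tr Tri.
have lT x : x \in map tri_t tris -> T x by case/mapP => Tr Tri ->; have [] := WT Tr Tri.
have covS y : S y -> exists2 x, x \in map tri_s tris & orbZ m x y.
  by move/(witness_coverS hc HW) => [Tr Tri o]; exists (tri_s Tr) => //; apply: map_f.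
have covT y : T y -> exists2 x, x \in map tri_t tris & orbZ m x y.
  by move/(witness_coverT hc HW) => [Tr Tri o]; exists (tri_t Tr) => //; apply: map_f.
rewrite (crossing_card R i hm uS lS covS (pperm_inv R pf) (pperm_equiv R pf)).
rewrite (crossing_card R i hm uT lT covT (pperm_inv R pg) (pperm_equiv R pg)).
rewrite (crossing_card R i hm uS lS covS (pperm_inv R pf) (pperm_equiv R pgf)) !big_map.
by split; apply: eq_big_seq => Tr /WT [_ et _ eu _]; rewrite /= -?et -?eu.
Qed.

End Correspondence.

Theorem mainTheorem8 (R : realType) (m k : nat) (c : int -> R) :
  (0 < k)%N -> (k < m)%N -> beta_family m c ->
  [/\ (* the correspondence (f, g, g o f) |-> (x, y, z) is one-to-one *)
      (forall S f T g S' f' T' g',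
         composable m k S f T g -> composable m k S' f' T' g' ->
         liftAB c S f = liftAB c S' f' ->
         liftBG c T g = liftBG c T' g' ->
         liftAG R S (g \o f) = liftAG R S' (g' \o f') ->
         [/\ S = S', T = T', {in S, f =1 f'} & {in T, g =1 g'}]),
      (* it maps composable triples to triangularly connected triples *)
      (forall S f T g, composable m k S f T g ->
         tri_connected m k c (liftAB c S f) (liftBG c T g) (liftAG R S (g \o f))),
      (* and every triangularly connected triple of states arises this way *)
      (forall X Y Z, stateAB m k c X -> stateBG m k c Y -> stateAG R m k Z ->
         tri_connected m k c X Y Z ->
         exists S f T g, [/\ composable m k S f T g,
           X = liftAB c S f, Y = liftBG c T g & Z = liftAG R S (g \o f)])
    & (* the multiplicity formula *)
      (forall S f T g tris, composable m k S f T g ->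
         tri_witness m k c (liftAB c S f) (liftBG c T g) (liftAG R S (g \o f)) tris ->
         forall i : int, 1 <= i <= m%:Z ->
         exists n : nat, local_mult m c tris i n /\
           wt R S f i + wt R T g i = wt R S (g \o f) i + n%:R)].
Proof.
move=> k0 km hc; split.
- move=> S f T g S' f' T' g' _ _ /(liftAB_inj hc) [-> Ef] /(liftBG_inj hc) [-> Eg] _.
  by split.
- exact: composable_connected hc.
- exact: connected_composable hc.
move=> S f T g tris C HW i _; have hm : (1 < m)%N by apply: leq_ltn_trans km.
pose n := (\sum_(Tr <- tris) puncture_count m i (sep (tri_s Tr) (tri_t Tr) (tri_u Tr)))%N.
exists n; split; first exact: witness_local_mult.
rewrite /wt; have [-> -> ->] := witness_crossings hc i hm C HW.
have Nid : (\sum_(Tr <- tris) puncture_count m i (cross (tri_s Tr) (tri_t Tr)) +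
            \sum_(Tr <- tris) puncture_count m i (cross (tri_t Tr) (tri_u Tr)) =
            \sum_(Tr <- tris) puncture_count m i (cross (tri_s Tr) (tri_u Tr)) + 2 * n)%N.
  rewrite -big_split big_distrr -big_split /=.
  by apply: eq_bigr => Tr _; apply: puncture_count_identity.
by move/(congr1 (fun x : nat => (x%:R : R))): Nid; rewrite !natrD; lra.
Qed.
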